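(* Let $K\subseteq L$ be fields, $x=(x_1,\dots,x_n)$, and $H\in L[x]^m$ such that $e_1,\dots,e_s$ are projective image apices of $H$ over $K$. Write $H'=(H_{s+1},\dots,H_m)$. (i) $a\in L^m$ is an image apex of $H$ over $K$ if and only if $(a_{s+1},\dots,a_m)$ is an image apex of $H'$ over $K$. (ii) If $p\in L^m$ has $p_i\ne0$ for some $i>s$, then $p$ is a projective image apex of $H$ over $K$ if and only if $(p_{s+1},\dots,p_m)$ is a projective image apex of $H'$ over $K$. (iii) $\operatorname{trdeg}_K K(H)=\operatorname{trdeg}_K K(H')+s$.
   Context: $e_i$ is the $i$-th standard basis vector. With $y$ a tuple of indeterminates of the appropriate length and $t$ new: $a$ is an image apex of $G$ over $K$ if for all $f\in K[y]$, $f(G)=0\Rightarrow f((1-t)G+ta)=0$; $p$ is a projective image apex of $G$ over $K$ if $p\ne0$ and $f(G)=0\Rightarrow f(G+tp)=0$ for all $f\in K[y]$. $\operatorname{trdeg}_K K(G)$: transcendence degree over $K$ of the field generated by the components of $G$. *)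

From HB Require Import structures.
From mathcomp Require Import all_boot all_order all_algebra.
From mathcomp Require Import fraction.
Set Implicit Arguments. Unset Strict Implicit. Unset Printing Implicit Defensive.
Import Order.TTheory GRing.Theory Num.Theory.
Local Open Scope ring_scope.

(* Polynomial ring R[x_0,...,x_{n-1}] as iterated univariate polynomials:
   mpoly R (n+1) = (mpoly R n)[x_n]. *)
Fixpoint mpoly (R : idomainType) (n : nat) : idomainType :=
  match n with
  | 0 => R
  | n'.+1 => [the idomainType of {poly (mpoly R n')}]
  end.

Fixpoint mconst (R : idomainType) (n : nat) : R -> mpoly R n :=
  match n return R -> mpoly R n with
  | 0 => fun c => c
  | n'.+1 => fun c => (mconst n' c)%:P : {poly mpoly R n'}
  end.

Fixpoint meval (K : idomainType) (A : comNzRingType) (phi : K -> A) (m : nat)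
  : ('I_m -> A) -> mpoly K m -> A :=
  match m return ('I_m -> A) -> mpoly K m -> A with
  | 0 => fun _ f => phi f
  | m'.+1 => fun v (f : {poly mpoly K m'}) =>
      (map_poly (meval phi (fun i : 'I_m' => v (widen_ord (leqnSn m') i))) f).[v ord_max]
  end.

Section Apex.
Variables (K L : fieldType) (iota : {rmorphism K -> L}) (n m : nat).

Definition coefLx (k : K) : mpoly L n := mconst n (iota k).
Definition coefLxt (k : K) : {poly mpoly L n} := (coefLx k)%:P.

Definition vanishes_at (G : 'I_m -> mpoly L n) (f : mpoly K m) : Prop :=
  meval coefLx G f = 0.

Definition image_apex (G : 'I_m -> mpoly L n) (a : 'I_m -> L) : Prop :=
  forall f : mpoly K m, vanishes_at G f ->
    meval coefLxt
      (fun i => (1 - 'X) * (G i)%:P + 'X * (mconst n (a i))%:P) f = 0.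

Definition proj_image_apex (G : 'I_m -> mpoly L n) (p : 'I_m -> L) : Prop :=
  (exists i, p i != 0) /\
  forall f : mpoly K m, vanishes_at G f ->
    meval coefLxt (fun i => (G i)%:P + 'X * (mconst n (p i))%:P) f = 0.

(* The field Frac(L[x]) in which K(G) lives. *)
Definition FLx := {fraction (mpoly L n)}.
Definition toF (q : mpoly L n) : FLx := @FracField.tofrac (mpoly L n) q.
Definition coefF (k : K) : FLx := toF (coefLx k).

Definition in_KG (G : 'I_m -> mpoly L n) (z : FLx) : Prop :=
  exists f g : mpoly K m,
    meval coefF (fun i => toF (G i)) g != 0 /\
    z = meval coefF (fun i => toF (G i)) f / meval coefF (fun i => toF (G i)) g.

Definition alg_indep (k : nat) (z : 'I_k -> FLx) : Prop :=
  forall f : mpoly K k, meval coefF z f = 0 -> f = 0.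

Definition trdeg_is (G : 'I_m -> mpoly L n) (d : nat) : Prop :=
  (exists z : 'I_d -> FLx, (forall i, in_KG G (z i)) /\ alg_indep z) /\
  (forall (k : nat) (z : 'I_k -> FLx),
      (forall i, in_KG G (z i)) -> alg_indep z -> (k <= d)%N).

End Apex.

Definition std_basis (L : fieldType) (s r : nat) (j : 'I_s) : 'I_(s + r) -> L :=
  fun i => if i == lshift r j then 1 else 0.

(* If e_j is a projective apex of H then f(H) = 0 implies f(H + t e_j) = 0, so
   all Hasse derivatives of f in x_j vanish at H as well, and the relations of
   H survive replacing H_1, ..., H_s by arbitrary values. Substituting generic
   values shows that the coefficients of a relation f, viewed as a polynomial
   in y_1, ..., y_s, are relations of H'. Hence a point kills all relations of
   H exactly when its tail kills all relations of H', which gives (i) and (ii),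
   and a transcendence basis of K(H') stays algebraically independent when
   H_1, ..., H_s are added to it, which is the lower bound in (iii).
   The upper bound is a dimension count: if v is algebraic over K(u), scale v
   to be integral over K[u] and write independent z_i = a_i / b_i with
   a_i, b_i in K[u, v]; the D^k products of the z_i with exponents below D,
   after clearing denominators, lie in a space spanned by O(D^|u|) monomials,
   so k <= |u|. *)

From HB Require Import structures.
From mathcomp Require Import all_boot all_order all_algebra.
From mathcomp Require Import fraction ring zify.
From Stdlib Require Import Classical.
Import GRing.Theory.
Local Open Scope ring_scope.
Set Implicit Arguments. Unset Strict Implicit. Unset Printing Implicit Defensive.

Fixpoint mconst_rmorph (R : idomainType) (m : nat) : {rmorphism R -> mpoly R m} :=
  match m return {rmorphism R -> mpoly R m} with
  | 0 => idfun
  | m'.+1 => (polyC \o mconst_rmorph R m')%FUN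
  end.

Lemma mconst_rmorphE (R : idomainType) m (c : R) : mconst_rmorph R m c = mconst m c.
Proof. by elim: m => //= m ->. Qed.

Fixpoint mvar (R : idomainType) (m : nat) : 'I_m -> mpoly R m :=
  match m return 'I_m -> mpoly R m with
  | 0 => fun _ => 0
  | m'.+1 => fun i =>
      match insub (val i) with
      | Some j => ((mvar R j)%:P : {poly mpoly R m'})
      | None => 'X
      end
  end.

Lemma mvar_widen (R : idomainType) m (j : 'I_m) :
  mvar R (widen_ord (leqnSn m) j) = (mvar R j)%:P :> mpoly R m.+1.
Proof.
rewrite /=; case: insubP => [j' _ Ej|]; last by rewrite /= ltn_ord.
by congr (mvar R _)%:P; apply: val_inj.
Qed.

Lemma mvar_max (R : idomainType) m : @mvar R m.+1 ord_max = 'X.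
Proof. by rewrite /=; case: insubP => [j|]; [rewrite /= ltnn|]. Qed.

Section Meval.
Variable K : idomainType.

Lemma eq_meval (A : comNzRingType) (phi phi' : K -> A) m (v v' : 'I_m -> A) :
  phi =1 phi' -> v =1 v' -> meval phi v =1 meval phi' v'.
Proof.
elim: m v v' => [|m IH] v v' Hphi Hv f /=; first exact: Hphi.
rewrite Hv; congr (_.[_]); apply: eq_map_poly => c; apply: IH => // i; exact: Hv.
Qed.

Lemma rmorph_meval (A B : comNzRingType) (chi : {rmorphism A -> B}) (phi : K -> A) m
    (v : 'I_m -> A) f :
  chi (meval phi v f) = meval (chi \o phi) (chi \o v) f.
Proof.
elim: m v f => [|m IH] v f //=.
rewrite -horner_map -map_poly_comp; congr (_.[_]); apply: eq_map_poly => c /=.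
exact: IH.
Qed.

Fixpoint meval_rmorph (A : comNzRingType) (phi : {rmorphism K -> A}) (m : nat) :
    ('I_m -> A) -> {rmorphism mpoly K m -> A} :=
  match m return ('I_m -> A) -> {rmorphism mpoly K m -> A} with
  | 0 => fun _ => phi
  | m'.+1 => fun v =>
      (horner_eval (v ord_max)
        \o map_poly (meval_rmorph phi (fun i : 'I_m' => v (widen_ord (leqnSn m') i))))%FUN
  end.

Lemma meval_rmorphE (A : comNzRingType) (phi : {rmorphism K -> A}) m (v : 'I_m -> A) f :
  meval_rmorph phi v f = meval phi v f.
Proof.
elim: m v f => [|m IH] v f //=.
by rewrite horner_evalE; congr (_.[_]); apply: eq_map_poly => c; exact: IH.
Qed.

Section MevalRmorph.
Variables (A : comNzRingType) (phi : {rmorphism K -> A}) (m : nat) (v : 'I_m -> A).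

Lemma meval0 : meval phi v 0 = 0.
Proof. by rewrite -meval_rmorphE rmorph0. Qed.

Lemma meval1 : meval phi v 1 = 1.
Proof. by rewrite -meval_rmorphE rmorph1. Qed.

Lemma mevalD f g : meval phi v (f + g) = meval phi v f + meval phi v g.
Proof. by rewrite -!meval_rmorphE rmorphD. Qed.

Lemma mevalM f g : meval phi v (f * g) = meval phi v f * meval phi v g.
Proof. by rewrite -!meval_rmorphE rmorphM. Qed.

Lemma meval_sum (I : Type) (r : seq I) (F : I -> mpoly K m) :
  meval phi v (\sum_(i <- r) F i) = \sum_(i <- r) meval phi v (F i).
Proof. by rewrite -meval_rmorphE rmorph_sum; apply: eq_bigr => i _; rewrite meval_rmorphE. Qed.

Lemma map_poly_meval (P : {poly mpoly K m}) :
  map_poly (meval phi v) P = map_poly (meval_rmorph phi v) P.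
Proof. by apply: eq_map_poly => c; rewrite meval_rmorphE. Qed.

End MevalRmorph.

Lemma mevalS (A : comNzRingType) (phi : {rmorphism K -> A}) m (v : 'I_m.+1 -> A)
    (f : {poly mpoly K m}) :
  meval phi v (f : mpoly K m.+1) =
  (map_poly (meval_rmorph phi (fun i : 'I_m => v (widen_ord (leqnSn m) i))) f).[v ord_max].
Proof. by rewrite /=; congr (_.[_]); apply: eq_map_poly => c; rewrite meval_rmorphE. Qed.

Lemma meval_mvar (A : comNzRingType) (phi : {rmorphism K -> A}) m (v : 'I_m -> A) i :
  meval phi v (mvar K i) = v i.
Proof.
elim: m v i => [|m IH] v i; first by case: i.
rewrite mevalS /=; case: insubP => [j _ Ej|Hi].
  by rewrite map_polyC hornerC /= meval_rmorphE IH; congr v; apply: val_inj.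
rewrite map_polyX hornerX; congr v; apply: val_inj => /=.
by move: (ltn_ord i) Hi; rewrite ltnS leq_eqVlt => /orP[/eqP|->].
Qed.

Lemma meval_mconst (A : comNzRingType) (phi : {rmorphism K -> A}) m (v : 'I_m -> A) c :
  meval phi v (mconst m c) = phi c.
Proof.
elim: m v => [|m IH] v //.
by rewrite mevalS map_polyC hornerC /= meval_rmorphE IH.
Qed.

Lemma horner_map_polyC_X (R : nzRingType) (p : {poly R}) : (map_poly polyC p).['X] = p.
Proof.
rewrite horner_coef size_map_polyC -[RHS]coefK poly_def.
by apply: eq_bigr => i _; rewrite coef_map /= mul_polyC.
Qed.

Lemma meval_generic_poly (B : idomainType) (psi : {rmorphism K -> B}) m (g : {poly mpoly K m}) :
  meval (mconst_rmorph B m.+1 \o psi) (@mvar B m.+1) (g : mpoly K m.+1) =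
  map_poly (meval (mconst_rmorph B m \o psi) (@mvar B m)) g.
Proof.
rewrite mevalS mvar_max -[RHS]horner_map_polyC_X -map_poly_comp_id0 ?meval0 //.
congr (_.[_]); apply: eq_map_poly => c /=.
rewrite meval_rmorphE (eq_meval (phi' := polyC \o (mconst_rmorph B m \o psi))
  (v' := polyC \o (@mvar B m))) ?rmorph_meval // => i; exact: mvar_widen.
Qed.

Lemma meval_mvar_id m f : meval (mconst m) (@mvar K m) f = f.
Proof.
elim: m f => [|m IH] f //.
rewrite (eq_meval (phi' := mconst_rmorph K m.+1 \o idfun) (v' := @mvar K m.+1)) //; last first.
  by move=> c /=; rewrite mconst_rmorphE.
rewrite meval_generic_poly (eq_map_poly (g := id)) ?map_poly_id // => c.
by rewrite (eq_meval (phi' := mconst m) (v' := @mvar K m)) // => x; rewrite mconst_rmorphE.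
Qed.

End Meval.

Lemma size_map_poly_le (R S : nzSemiRingType) (g : R -> S) (p : {poly R}) :
  (size (map_poly g p) <= size p)%N.
Proof. by rewrite /map_poly size_poly. Qed.

Section Taylor.
Variables (K : idomainType) (m : nat).

Definition add_at (R : nzRingType) (P : 'I_m -> R) (j : 'I_m) (c : R) : 'I_m -> R :=
  fun i => P i + (if i == j then c else 0).

(* [f (x + t e_j)] as a polynomial in [t]; its coefficients are the Hasse
   derivatives of [f] in the direction [x_j]. *)
Definition taylor_at (j : 'I_m) (f : mpoly K m) : {poly mpoly K m} :=
  meval (polyC \o mconst m) (add_at (fun i => (mvar K i)%:P) j 'X) f.

Lemma map_taylor_at (B : comNzRingType) (psi : {rmorphism K -> B}) (P : 'I_m -> B) j f :
  map_poly (meval_rmorph psi P) (taylor_at j f) =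
  meval (polyC \o psi) (add_at (fun i => (P i)%:P) j 'X) f.
Proof.
rewrite /taylor_at rmorph_meval; apply: eq_meval => [a|i] /=.
  by rewrite map_polyC /= meval_rmorphE meval_mconst.
rewrite /add_at rmorphD /= map_polyC /= meval_rmorphE meval_mvar.
by case: eqP => _; rewrite ?map_polyX ?rmorph0.
Qed.

Lemma meval_add_at (B : comNzRingType) (psi : {rmorphism K -> B}) (P : 'I_m -> B) j c f :
  meval psi (add_at P j c) f =
  \sum_(k < size (taylor_at j f)) meval psi P ((taylor_at j f)`_k) * c ^+ k.
Proof.
have -> : meval psi (add_at P j c) f =
    (map_poly (meval_rmorph psi P) (taylor_at j f)).[c].
  rewrite map_taylor_at -horner_evalE rmorph_meval.
  apply: eq_meval => [a|i] /=; first by rewrite horner_evalE hornerC.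
  rewrite /add_at horner_evalE hornerD hornerC.
  by case: eqP => _; rewrite ?hornerX ?horner0.
rewrite (horner_coef_wide _ (size_map_poly_le _ _)).
by apply: eq_bigr => k _; rewrite coef_map /= meval_rmorphE.
Qed.

End Taylor.

Section CoordApex.
Variables (K : idomainType) (m : nat) (A : comNzRingType) (phi : {rmorphism K -> A}).
Variable G : 'I_m -> A.

(* [e_j] is a projective apex of [G], phrased over an arbitrary ring [A]. *)
Definition coord_apex (j : 'I_m) := forall f : mpoly K m, meval phi G f = 0 ->
  meval (polyC \o phi) (add_at (fun i => (G i)%:P) j 'X) f = 0.

Lemma coord_apex_taylor j f : coord_apex j -> meval phi G f = 0 ->
  forall k, meval phi G ((taylor_at j f)`_k) = 0.
Proof.
move=> Hj Hf k; have := congr1 (fun p : {poly A} => p`_k) (map_taylor_at phi G j f).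
by rewrite Hj // coef0 coef_map /= meval_rmorphE.
Qed.

Lemma sum_if_eq (R : nzRingType) (js : seq 'I_m) (c : 'I_m -> R) i : uniq js ->
  \sum_(j <- js) (if i == j then c j else 0) = if i \in js then c i else 0.
Proof.
elim: js => [|j js IH] /=; first by rewrite big_nil.
move=> /andP[Hj Hu]; rewrite big_cons IH // inE.
case: (eqVneq i j) => [->|_] /=; last by rewrite add0r.
by rewrite (negbTE Hj) addr0.
Qed.

Lemma coord_apex_add (B : comNzRingType) (chi : {rmorphism A -> B}) (js : seq 'I_m) :
  (forall j, j \in js -> coord_apex j) ->
  forall (c : 'I_m -> B) f, meval phi G f = 0 ->
  meval (chi \o phi) (fun i => chi (G i) + \sum_(j <- js) (if i == j then c j else 0)) f = 0.
Proof.
elim: js => [|j js IH] Hjs c f Hf.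
  rewrite (eq_meval (phi' := chi \o phi) (v' := chi \o G)) //; last first.
    by move=> i; rewrite big_nil addr0.
  by rewrite -rmorph_meval Hf rmorph0.
rewrite (eq_meval (phi' := (chi \o phi)%FUN : {rmorphism K -> B})
   (v' := add_at (fun i => chi (G i) + \sum_(j <- js) (if i == j then c j else 0)) j (c j))) //;
  last by move=> i; rewrite /add_at big_cons addrA addrAC.
rewrite meval_add_at big1 // => k _.
rewrite IH ?mul0r //; first by move=> j' Hj'; apply: Hjs; rewrite inE Hj' orbT.
by apply: coord_apex_taylor => //; apply: Hjs; rewrite inE eqxx.
Qed.

Lemma coord_apex_subst (B : comNzRingType) (chi : {rmorphism A -> B}) (js : seq 'I_m) :
  uniq js -> (forall j, j \in js -> coord_apex j) ->
  forall (w : 'I_m -> B) f, meval phi G f = 0 ->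
  meval (chi \o phi) (fun i => if i \in js then w i else chi (G i)) f = 0.
Proof.
move=> Hu Hjs w f Hf.
rewrite (eq_meval (phi' := chi \o phi) (v' := fun i =>
  chi (G i) + \sum_(j <- js) (if i == j then w j - chi (G j) else 0))) //.
  exact: coord_apex_add.
by move=> i; rewrite sum_if_eq //; case: ifP => _; rewrite ?addr0 // addrC subrK.
Qed.

End CoordApex.

Section Coefficients.
Variable A : idomainType.

Fixpoint all_mcoef (P : A -> Prop) (s : nat) : mpoly A s -> Prop :=
  match s return mpoly A s -> Prop with
  | 0 => fun g => P g
  | s'.+1 => fun g : {poly mpoly A s'} => forall k, all_mcoef P (g`_k)
  end.

Lemma all_mcoef_sub (P Q : A -> Prop) s (g : mpoly A s) :
  (forall c, P c -> Q c) -> all_mcoef P g -> all_mcoef Q g.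
Proof. by move=> PQ; elim: s g => [|s IH] g /=; [apply: PQ|move=> Hg k; apply: IH]. Qed.

Lemma all_mcoef_eq0 s (g : mpoly A s) : all_mcoef (eq^~ 0) g -> g = 0.
Proof. by elim: s g => [|s IH] g //= Hg; apply/polyP => k; rewrite coef0; apply: IH. Qed.

Lemma all_mcoef_meval (C : comNzRingType) (psi : {rmorphism A -> C}) s (g : mpoly A s) :
  all_mcoef (fun c => psi c = 0) g -> forall w, meval psi w g = 0.
Proof.
elim: s g => [|s IH] g //= Hg w.
rewrite horner_coef big1 // => k _.
by rewrite coef_map_id0 ?meval0 // IH ?mul0r.
Qed.

Lemma meval_generic_eq0 (B : idomainType) (psi : {rmorphism A -> B}) s (g : mpoly A s) :
  meval (mconst_rmorph B s \o psi) (@mvar B s) g = 0 -> all_mcoef (fun c => psi c = 0) g.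
Proof.
elim: s g => [|s IH] g Hg //= k; apply: IH.
have := congr1 (fun p : {poly mpoly B s} => p`_k) (meval_generic_poly psi g).
by rewrite Hg coef0 coef_map_id0 ?meval0.
Qed.

End Coefficients.

Definition relabel (K : idomainType) a b (tau : 'I_a -> 'I_b) (g : mpoly K a) : mpoly K b :=
  meval (mconst_rmorph K b) (fun i => mvar K (tau i)) g.

Lemma meval_relabel (K : idomainType) (C : comNzRingType) (psi : {rmorphism K -> C}) a b
    (tau : 'I_a -> 'I_b) (P : 'I_b -> C) (g : mpoly K a) :
  meval psi P (relabel tau g) = meval psi (fun i => P (tau i)) g.
Proof.
rewrite -meval_rmorphE rmorph_meval; apply: eq_meval => [c|i] /=.
  by rewrite meval_rmorphE mconst_rmorphE meval_mconst.
by rewrite meval_rmorphE meval_mvar.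
Qed.

Section SplitVars.
Variables (K : idomainType) (m a b : nat) (sigma : 'I_m -> 'I_a + 'I_b).

Definition sum_case (T : Type) (u : 'I_a -> T) (v : 'I_b -> T) (i : 'I_m) : T :=
  match sigma i with inl j => u j | inr j => v j end.

(* [f] as a polynomial in the [b] variables sent right by [sigma], with
   coefficients polynomials in the [a] variables sent left. *)
Definition split_vars (f : mpoly K m) : mpoly (mpoly K a) b :=
  meval (mconst_rmorph (mpoly K a) b \o mconst_rmorph K a)
    (sum_case (fun j => mconst b (mvar K j)) (@mvar (mpoly K a) b)) f.

Lemma meval_split_vars (C : comNzRingType) (phi : {rmorphism K -> C})
    (u : 'I_a -> C) (v : 'I_b -> C) f :
  meval phi (sum_case u v) f = meval (meval_rmorph phi u) v (split_vars f).
Proof.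
rewrite -[RHS]meval_rmorphE rmorph_meval; apply: eq_meval => [c|i] /=.
  by rewrite !mconst_rmorphE meval_rmorphE meval_mconst meval_rmorphE meval_mconst.
rewrite /sum_case; case: (sigma i) => j; rewrite meval_rmorphE.
  by rewrite meval_mconst meval_rmorphE meval_mvar.
by rewrite meval_mvar.
Qed.

Lemma split_vars_eq0 (tau1 : 'I_a -> 'I_m) (tau2 : 'I_b -> 'I_m) f :
  sum_case tau1 tau2 =1 id -> split_vars f = 0 -> f = 0.
Proof.
move=> Htau Hf0; rewrite -(meval_mvar_id f).
rewrite (eq_meval (phi' := mconst_rmorph K m) (v' := sum_case (fun j => mvar K (tau1 j))
  (fun j => mvar K (tau2 j)))); first by rewrite meval_split_vars Hf0 meval0.
- by move=> c; rewrite mconst_rmorphE.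
- by move=> i; rewrite -[in LHS](Htau i) /sum_case; case: (sigma i).
Qed.

End SplitVars.

Lemma meval_generic_split (K : idomainType) m a b (sigma : 'I_m -> 'I_a + 'I_b)
    (A : idomainType) (phi : {rmorphism K -> A}) (u : 'I_a -> A) f :
  meval (mconst_rmorph A b \o phi)
    (sum_case sigma (fun j => mconst_rmorph A b (u j)) (@mvar A b)) f = 0 ->
  all_mcoef (fun c => meval phi u c = 0) (split_vars sigma f).
Proof.
rewrite meval_split_vars => Hf.
apply: (all_mcoef_sub (P := fun c => meval_rmorph phi u c = 0)) => [c|].
  by rewrite meval_rmorphE.
apply: meval_generic_eq0; apply: etrans Hf; apply: eq_meval => // c /=.
by rewrite !meval_rmorphE rmorph_meval.
Qed.

Lemma split_rshift m n (j : 'I_n) : split (rshift m j) = inr j.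
Proof. exact: (unsplitK (inr j)). Qed.

Lemma split_lshift m n (j : 'I_m) : split (lshift n j) = inl j.
Proof. exact: (unsplitK (inl j)). Qed.

Section HeadTail.
Variables (K A : idomainType) (phi : {rmorphism K -> A}) (s r : nat).
Variable G : 'I_(s + r) -> A.
Hypothesis head_apex : forall j : 'I_s, coord_apex phi G (lshift r j).

Definition tail_head (i : 'I_(s + r)) : 'I_r + 'I_s :=
  match split i with inl j => inr j | inr j => inl j end.

Lemma sum_case_tail_head (T : Type) (P : 'I_(s + r) -> T) :
  sum_case tail_head (fun j => P (rshift s j)) (fun j => P (lshift r j)) =1 P.
Proof.
by move=> i; rewrite /sum_case /tail_head; case: splitP => j Hj; congr P; apply: val_inj.
Qed.

Definition heads : seq 'I_(s + r) := [seq lshift r j | j <- enum 'I_s].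

Lemma heads_uniq : uniq heads.
Proof. by rewrite map_inj_uniq ?enum_uniq //; exact: lshift_inj. Qed.

Lemma mem_heads i : (i \in heads) = (i < s)%N.
Proof.
apply/mapP/idP => [[j _ ->]|Hi]; first by rewrite /= ltn_ord.
by exists (Ordinal Hi); rewrite ?mem_enum //; apply: val_inj.
Qed.

(* Whether [f] is a relation of [G] is decided by the tail coordinates alone:
   plugging generic values into the head shows that the coefficients of [f]
   as a polynomial in the head variables are relations of the tail. *)
Lemma relation_from_tail f : meval phi G f = 0 ->
  forall (C : comNzRingType) (psi : {rmorphism K -> C}) (Q : 'I_(s + r) -> C),
  (forall g : mpoly K r, meval phi (fun i => G (rshift s i)) g = 0 ->
                         meval psi (fun i => Q (rshift s i)) g = 0) ->
  meval psi Q f = 0.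
Proof.
move=> Hf C psi Q HQ.
have Hgen : meval (mconst_rmorph A s \o phi) (sum_case tail_head
    (fun j => mconst_rmorph A s (G (rshift s j))) (@mvar A s)) f = 0.
  rewrite -(coord_apex_subst (mconst_rmorph A s) heads_uniq _
    (sum_case tail_head (fun _ => 0) (@mvar A s)) Hf); last by move=> _ /mapP[j _ ->].
  apply: eq_meval => // i; rewrite mem_heads /sum_case /tail_head.
  by case: splitP => j Hj //; congr (mconst_rmorph A s (G _)); exact: val_inj.
have /all_mcoef_meval Htail : all_mcoef (fun c => meval_rmorph psi (fun i => Q (rshift s i)) c = 0)
    (split_vars tail_head f).
  by apply: all_mcoef_sub (meval_generic_split Hgen) => c; rewrite meval_rmorphE; exact: HQ.
rewrite -(Htail (fun j => Q (lshift r j))) -meval_split_vars.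
by apply: eq_meval => // i; rewrite sum_case_tail_head.
Qed.

Lemma indep_tail_head (d : nat) (sg : 'I_d -> 'I_r) :
  (forall g : mpoly K d, meval phi (fun i => G (rshift s (sg i))) g = 0 -> g = 0) ->
  forall Phi : mpoly K (d + s),
  meval phi (sum_case split (fun j => G (rshift s (sg j))) (fun j => G (lshift r j))) Phi = 0 ->
  Phi = 0.
Proof.
move=> Hind Phi HPhi.
pose tau := sum_case split (fun j => rshift s (sg j)) (fun j => lshift r j).
have Hf : meval phi G (relabel tau Phi) = 0.
  by rewrite meval_relabel -[RHS]HPhi; apply: eq_meval => // i; rewrite /tau /sum_case; case: split.
pose Q := sum_case tail_head (fun j => mconst_rmorph A s (G (rshift s j))) (@mvar A s).
have HQ : meval (mconst_rmorph A s \o phi) Q (relabel tau Phi) = 0.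
  apply: (relation_from_tail Hf) => g Hg.
  rewrite (eq_meval (phi' := mconst_rmorph A s \o phi)
    (v' := mconst_rmorph A s \o (fun i => G (rshift s i)))) //.
    by rewrite -rmorph_meval Hg rmorph0.
  by move=> i; rewrite /Q /sum_case /tail_head split_rshift.
rewrite meval_relabel in HQ.
have Hcoef : all_mcoef (fun c => meval phi (fun i => G (rshift s (sg i))) c = 0)
    (split_vars split Phi).
  apply: meval_generic_split; rewrite -[RHS]HQ; apply: eq_meval => // i.
  rewrite /Q /tau /sum_case /tail_head.
  by case: (split i) => j; rewrite ?split_rshift ?split_lshift.
apply: (@split_vars_eq0 K (d + s) d s split (lshift s) (@rshift d s)).
  by move=> i; rewrite -[RHS](splitK i) /sum_case; case: (split i).
by apply: all_mcoef_eq0; apply: all_mcoef_sub Hcoef => c; exact: Hind.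
Qed.

End HeadTail.

Section ApexTail.
Variables (K L : fieldType) (iota : {rmorphism K -> L}) (n s r : nat).
Variable H : 'I_(s + r) -> mpoly L n.

Definition coefL : {rmorphism K -> mpoly L n} := (mconst_rmorph L n \o iota)%FUN.

Lemma coefLxE : coefLx iota n =1 coefL.
Proof. by move=> c; rewrite /coefLx /coefL /= mconst_rmorphE. Qed.

Lemma coefLxtE : coefLxt iota n =1 (polyC \o coefL).
Proof. by move=> c; rewrite /coefLxt /= coefLxE. Qed.

Lemma vanishes_atE m (G : 'I_m -> mpoly L n) f :
  vanishes_at iota G f <-> meval coefL G f = 0.
Proof. by rewrite /vanishes_at (eq_meval (phi' := coefL) (v' := G)) //; exact: coefLxE. Qed.

Lemma meval_coefLxtE m (P : 'I_m -> {poly mpoly L n}) f :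
  meval (coefLxt iota n) P f = meval (polyC \o coefL) P f.
Proof. by apply: eq_meval => // c; rewrite coefLxtE. Qed.

Lemma std_basis_coord_apex (j : 'I_s) :
  proj_image_apex iota H (@std_basis L s r j) -> coord_apex coefL H (lshift r j).
Proof.
move=> [_ Hj] f /vanishes_atE Hf; rewrite -(Hj f Hf) meval_coefLxtE.
apply: eq_meval => // i; rewrite /add_at /std_basis /=.
by case: eqP => _; rewrite -mconst_rmorphE ?rmorph1 ?mulr1 ?rmorph0 ?mulr0.
Qed.

Hypothesis hH : forall j : 'I_s, proj_image_apex iota H (@std_basis L s r j).

(* Both kinds of apex say that a point [P] of [L[x][t]^(s+r)] kills every
   relation of [H]; this property only depends on the tail of [P]. *)
Lemma kills_relations_tail (P : 'I_(s + r) -> {poly mpoly L n}) :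
  (forall f, vanishes_at iota H f -> meval (coefLxt iota n) P f = 0) <->
  (forall g : mpoly K r, vanishes_at iota (fun i => H (rshift s i)) g ->
    meval (coefLxt iota n) (fun i => P (rshift s i)) g = 0).
Proof.
split=> HP g /vanishes_atE Hg.
  have /HP : vanishes_at iota H (relabel (@rshift s r) g).
    by apply/vanishes_atE; rewrite meval_relabel.
  by rewrite !meval_coefLxtE meval_relabel.
rewrite meval_coefLxtE; apply: (relation_from_tail _ Hg) => [j|g' /vanishes_atE Hg'].
  by apply: std_basis_coord_apex.
by rewrite -meval_coefLxtE; apply: HP.
Qed.

Lemma image_apex_tail (a : 'I_(s + r) -> L) :
  image_apex iota H a <->
  image_apex iota (fun i : 'I_r => H (rshift s i)) (fun i => a (rshift s i)).
Proof. exact: kills_relations_tail. Qed.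

Lemma proj_image_apex_tail (p : 'I_(s + r) -> L) : (exists i : 'I_r, p (rshift s i) != 0) ->
  (proj_image_apex iota H p <->
   proj_image_apex iota (fun i : 'I_r => H (rshift s i)) (fun i => p (rshift s i))).
Proof.
move=> [i Hi]; rewrite /proj_image_apex kills_relations_tail.
by split=> -[_ HP]; split=> //; [exists i | exists (rshift s i)].
Qed.

End ApexTail.

Section Generated.
Variables (K E : fieldType) (kappa : {rmorphism K -> E}).

Lemma meval_ind (P : E -> Prop) :
  (forall c, P (kappa c)) -> (forall a b, P a -> P b -> P (a + b)) ->
  (forall a b, P a -> P b -> P (a * b)) ->
  forall p (x : 'I_p -> E), (forall i, P (x i)) -> forall g, P (meval kappa x g).
Proof.
move=> Pc PD PM; elim=> [|p IH] x Px g; first exact: Pc.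
rewrite mevalS (horner_coef_wide _ (size_map_poly_le _ _)).
have P0 : P 0 by rewrite -(rmorph0 kappa).
have PX t : P (x ord_max ^+ t).
  by elim: t => [|t IHt]; rewrite ?expr0 -?(rmorph1 kappa) // exprS; apply: PM.
apply: (big_ind P) => // k _; apply: PM => //.
by rewrite coef_map_id0 ?rmorph0 //= meval_rmorphE; apply: IH.
Qed.

Definition in_alg p (x : 'I_p -> E) y := exists f, y = meval kappa x f.
Definition in_field p (x : 'I_p -> E) y := exists f g,
  meval kappa x g != 0 /\ y = meval kappa x f / meval kappa x g.
Definition alg_free p (x : 'I_p -> E) := forall f : mpoly K p, meval kappa x f = 0 -> f = 0.

Section Members.
Variables (p : nat) (x : 'I_p -> E).

Lemma in_alg_var i : in_alg x (x i).
Proof. by exists (mvar K i); rewrite meval_mvar. Qed.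

Lemma in_alg_const c : in_alg x (kappa c).
Proof. by exists (mconst p c); rewrite meval_mconst. Qed.

Lemma in_algD a b : in_alg x a -> in_alg x b -> in_alg x (a + b).
Proof. by case=> f -> [g ->]; exists (f + g); rewrite mevalD. Qed.

Lemma in_algM a b : in_alg x a -> in_alg x b -> in_alg x (a * b).
Proof. by case=> f -> [g ->]; exists (f * g); rewrite mevalM. Qed.

Lemma in_algN a : in_alg x a -> in_alg x (- a).
Proof.
by move=> Ha; rewrite -mulN1r -(rmorph1 kappa) -rmorphN; apply: in_algM Ha; exact: in_alg_const.
Qed.

Lemma in_algX a t : in_alg x a -> in_alg x (a ^+ t).
Proof.
move=> Ha; elim: t => [|t IH]; first by rewrite expr0 -(rmorph1 kappa); exact: in_alg_const.
by rewrite exprS; apply: in_algM.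
Qed.

Lemma in_alg_meval q (G : 'I_q -> E) f : (forall j, in_alg x (G j)) -> in_alg x (meval kappa G f).
Proof.
by move=> HG; apply: meval_ind => //; [exact: in_alg_const|exact: in_algD|exact: in_algM].
Qed.

Lemma in_alg_field y : in_alg x y -> in_field x y.
Proof. by case=> f ->; exists f, 1; rewrite meval1 divr1 oner_neq0. Qed.

Lemma in_field_var i : in_field x (x i).
Proof. by apply/in_alg_field/in_alg_var. Qed.

Lemma in_fieldD a b : in_field x a -> in_field x b -> in_field x (a + b).
Proof.
case=> f1 [g1 [h1 ->]] [f2 [g2 [h2 ->]]].
exists (f1 * g2 + f2 * g1), (g1 * g2); rewrite !(mevalD, mevalM) mulf_neq0 //.
by split=> //; field; apply/andP.
Qed.

Lemma in_fieldM a b : in_field x a -> in_field x b -> in_field x (a * b).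
Proof.
case=> f1 [g1 [h1 ->]] [f2 [g2 [h2 ->]]].
exists (f1 * f2), (g1 * g2); rewrite !mevalM mulf_neq0 //.
by split=> //; field; apply/andP.
Qed.

Lemma in_field_div a b : in_field x a -> in_field x b -> b != 0 -> in_field x (a / b).
Proof.
case=> f1 [g1 [h1 ->]] [f2 [g2 [h2 ->]]] hb.
have hf2 : meval kappa x f2 != 0 by apply: contraNneq hb => ->; rewrite mul0r.
exists (f1 * g2), (g1 * f2); rewrite !mevalM mulf_neq0 //.
by split=> //; field; rewrite h1 h2 hf2.
Qed.

Lemma in_field_meval q (G : 'I_q -> E) f :
  (forall j, in_field x (G j)) -> in_field x (meval kappa G f).
Proof.
move=> HG; apply: meval_ind => //; [|exact: in_fieldD|exact: in_fieldM].
by move=> c; apply/in_alg_field/in_alg_const.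
Qed.

Lemma in_field_trans q (G : 'I_q -> E) y :
  (forall j, in_field x (G j)) -> in_field G y -> in_field x y.
Proof. by move=> HG [f [g [Hg ->]]]; apply: in_field_div => //; exact: in_field_meval. Qed.

End Members.

Lemma eq_alg_free p (z z' : 'I_p -> E) : z =1 z' -> alg_free z -> alg_free z'.
Proof. by move=> Hz Hi f Hf; apply: Hi; rewrite -[RHS]Hf; apply: eq_meval. Qed.

End Generated.

Section Algebraic.
Variables (K E : fieldType) (kappa : {rmorphism K -> E}).

Definition algebraic_over p (w : 'I_p -> E) (y : E) := exists P : {poly mpoly K p},
  meval kappa w (lead_coef P) != 0 /\ (map_poly (meval kappa w) P).[y] = 0.

Lemma eq_algebraic_over p (w w' : 'I_p -> E) y :
  w =1 w' -> algebraic_over w y -> algebraic_over w' y.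
Proof.
move=> Hw [P [H1 H2]]; exists P; rewrite -(eq_meval (phi := kappa) (phi' := kappa) (v := w)) //.
by split=> //; rewrite -[RHS]H2; congr (_.[_]); apply: eq_map_poly => c; apply: eq_meval.
Qed.

Lemma algebraic_over_relabel p q (tau : 'I_p -> 'I_q) (w : 'I_q -> E) y :
  algebraic_over (fun i => w (tau i)) y -> algebraic_over w y.
Proof.
case=> P [HP1 HP2].
have Hrel g : meval kappa w (relabel tau g) = meval kappa (fun i => w (tau i)) g.
  exact: meval_relabel.
have Hrel0 : relabel tau (0 : mpoly K p) = 0 by rewrite /relabel meval0.
have Hl : relabel tau (lead_coef P) != 0.
  by apply: contraNneq HP1 => H0; rewrite -Hrel H0 meval0.
exists (map_poly (relabel tau) P); rewrite lead_coef_map_id0 // Hrel; split=> //.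
rewrite -map_poly_comp_id0 ?meval0 // -[RHS]HP2; congr (_.[_]).
by apply: eq_map_poly => g /=; rewrite Hrel.
Qed.

Lemma algebraic_over_var p (w : 'I_p -> E) i : algebraic_over w (w i).
Proof.
exists ('X - (mvar K i)%:P); rewrite lead_coefXsubC meval1 oner_neq0; split=> //.
by rewrite map_poly_meval map_polyXsubC hornerXsubC meval_rmorphE meval_mvar subrr.
Qed.

Definition snoc_pt d (w : 'I_d -> E) (y : E) : 'I_d.+1 -> E :=
  fun i => if unlift ord_max i is Some j then w j else y.

Lemma lift_max_widen d (j : 'I_d) : lift ord_max j = widen_ord (leqnSn d) j.
Proof. by apply: val_inj; rewrite /= /bump leqNgt ltn_ord. Qed.

Lemma snoc_pt_widen d (w : 'I_d -> E) y j : snoc_pt w y (widen_ord (leqnSn d) j) = w j.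
Proof. by rewrite /snoc_pt -lift_max_widen liftK. Qed.

Lemma snoc_pt_max d (w : 'I_d -> E) y : snoc_pt w y ord_max = y.
Proof. by rewrite /snoc_pt unlift_none. Qed.

Lemma meval_snoc_pt d (w : 'I_d -> E) y (f : {poly mpoly K d}) :
  meval kappa (snoc_pt w y) (f : mpoly K d.+1) = (map_poly (meval kappa w) f).[y].
Proof.
rewrite mevalS snoc_pt_max; congr (_.[_]); apply: eq_map_poly => c.
by rewrite meval_rmorphE; apply: eq_meval => // i; rewrite snoc_pt_widen.
Qed.

Lemma algebraic_snoc_pt d (w : 'I_d -> E) y :
  alg_free kappa w -> ~ alg_free kappa (snoc_pt w y) -> algebraic_over w y.
Proof.
move=> Hw /not_all_ex_not[f Hrel].
have Hf0 := not_imply_elim2 _ _ Hrel; have Hf := not_imply_elim _ _ Hrel.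
exists f; split; last by rewrite -meval_snoc_pt.
by apply: contra_notN Hf0 => /eqP /Hw /eqP; rewrite lead_coef_eq0 => /eqP.
Qed.

Lemma alg_free_nil (x : 'I_0 -> E) : alg_free kappa x.
Proof. by move=> f /= /eqP; rewrite fmorph_eq0 => /eqP. Qed.

Lemma exists_transcendence_basis p (x : 'I_p -> E) : exists d (sg : 'I_d -> 'I_p),
  alg_free kappa (fun i => x (sg i)) /\ forall j, algebraic_over (fun i => x (sg i)) (x j).
Proof.
elim: p x => [|p IH] x; first by exists 0, id; split; [exact: alg_free_nil|case].
pose x' i := x (widen_ord (leqnSn p) i).
have [d [sg [Hfree Halg]]] := IH x'.
pose w i := x' (sg i).
have Halg' j : algebraic_over (fun i => x (widen_ord (leqnSn p) (sg i))) (x (lift ord_max j)).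
  by rewrite lift_max_widen; apply: Halg.
case: (classic (alg_free kappa (snoc_pt w (x ord_max)))) => [Hfree2|Hnfree]; last first.
  exists d, (fun i => widen_ord (leqnSn p) (sg i)); split=> // j.
  by case: (unliftP ord_max j) => [j0 ->|->]; [exact: Halg'|exact: algebraic_snoc_pt].
pose sg' i := if unlift ord_max i is Some j then widen_ord (leqnSn p) (sg j) else ord_max.
have Ew : (fun i => x (sg' i)) =1 snoc_pt w (x ord_max).
  by move=> i; rewrite /sg' /snoc_pt; case: (unlift ord_max i).
exists d.+1, sg'; split; first by apply: eq_alg_free Hfree2 => i; rewrite -Ew.
move=> j; apply: (eq_algebraic_over (w := snoc_pt w (x ord_max))) => [i|]; first by rewrite Ew.
case: (unliftP ord_max j) => [j0 ->|->]; last first.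
  by rewrite -{2}(snoc_pt_max w (x ord_max)); apply: algebraic_over_var.
apply: (algebraic_over_relabel (tau := widen_ord (leqnSn d))).
by apply: eq_algebraic_over (Halg' j0) => i; rewrite snoc_pt_widen.
Qed.

End Algebraic.

Section ProdExp.
Variables (R : comNzRingType) (I : finType) (w : I -> R).

Lemma prod_expD (al ga : I -> nat) :
  \prod_i w i ^+ (al i + ga i)%N = (\prod_i w i ^+ al i) * \prod_i w i ^+ ga i.
Proof. by under eq_bigr do rewrite exprD; rewrite big_split. Qed.

Lemma prod_exp_delta (i0 : I) : \prod_i w i ^+ (i == i0) = w i0.
Proof.
rewrite (bigD1 i0) //= eqxx expr1 big1 ?mulr1 // => i /negbTE ->; exact: expr0.
Qed.

Lemma prod_exp_set (al : I -> nat) i0 t :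
  \prod_i w i ^+ (if i == i0 then t else al i) = w i0 ^+ t * \prod_(i | i != i0) w i ^+ al i.
Proof. by rewrite (bigD1 i0) //= eqxx; congr (_ * _); apply: eq_bigr => i /negbTE ->. Qed.

End ProdExp.

Section DegSpan.
Variables (K E : fieldType) (kappa : {rmorphism K -> E}) (N : nat) (u : 'I_N -> E).

Inductive deg_span (D : nat) : E -> Prop :=
| deg_span0 : deg_span D 0
| deg_spanM (ga : 'I_N -> nat) (c : K) (y : E) :
    (forall i, (ga i <= D)%N) -> deg_span D y -> deg_span D (kappa c * \prod_i u i ^+ ga i + y).

Lemma deg_span_le D1 D2 q : (D1 <= D2)%N -> deg_span D1 q -> deg_span D2 q.
Proof.
move=> HD; elim=> [|ga c y Hg _ IH]; first exact: deg_span0.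
by apply: deg_spanM => // i; apply: leq_trans (Hg i) HD.
Qed.

Lemma deg_spanD D a b : deg_span D a -> deg_span D b -> deg_span D (a + b).
Proof.
elim=> [|ga c y Hg _ IH] Hb; first by rewrite add0r.
by rewrite -addrA; apply: deg_spanM => //; apply: IH.
Qed.

Lemma deg_span_monomialM D1 D2 ga c b : (forall i, (ga i <= D1)%N) -> deg_span D2 b ->
  deg_span (D1 + D2) (kappa c * \prod_i u i ^+ ga i * b).
Proof.
move=> Hg; elim=> [|ga' c' y Hg' _ IH]; first by rewrite mulr0; exact: deg_span0.
rewrite mulrDr.
have -> : kappa c * \prod_i u i ^+ ga i * (kappa c' * \prod_i u i ^+ ga' i) =
    kappa (c * c') * \prod_i u i ^+ (ga i + ga' i)%N by rewrite rmorphM prod_expD; ring.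
by apply: deg_spanM => // i; exact: leq_add.
Qed.

Lemma deg_spanM2 D1 D2 a b : deg_span D1 a -> deg_span D2 b -> deg_span (D1 + D2) (a * b).
Proof.
move=> Ha Hb; elim: Ha => [|ga c y Hg _ IH]; first by rewrite mul0r; exact: deg_span0.
by rewrite mulrDl; apply: deg_spanD => //; exact: deg_span_monomialM.
Qed.

Lemma deg_span_const c : deg_span 0 (kappa c).
Proof.
have -> : kappa c = kappa c * \prod_i u i ^+ 0 + 0 by rewrite big1 ?mulr1 ?addr0.
by apply: deg_spanM => //; exact: deg_span0.
Qed.

Lemma deg_span_var i : deg_span 1 (u i).
Proof.
rewrite -[u i]addr0 -[u i]mul1r -(rmorph1 kappa) -(prod_exp_delta u i).
by apply: deg_spanM; [move=> j; exact: leq_b1|exact: deg_span0].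
Qed.

Lemma in_alg_deg_span q : in_alg kappa u q -> exists D, deg_span D q.
Proof.
case=> f ->; apply: (meval_ind (P := fun x => exists D, deg_span D x)).
- by move=> c; exists 0%N; apply: deg_span_const.
- move=> a b [D1 Ha] [D2 Hb]; exists (maxn D1 D2); apply: deg_spanD.
    by apply: deg_span_le Ha; rewrite leq_maxl.
  by apply: deg_span_le Hb; rewrite leq_maxr.
- by move=> a b [D1 Ha] [D2 Hb]; exists (D1 + D2)%N; apply: deg_spanM2.
- by move=> i; exists 1%N; apply: deg_span_var.
Qed.

End DegSpan.

Section BoxSpan.
Variables (K E : fieldType) (kappa : {rmorphism K -> E}).
Variables (N M : nat) (u : 'I_N -> E) (v : 'I_M -> E) (e Delta : nat).

Definition monomial (al : 'I_N -> nat) (be : 'I_M -> nat) : E :=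
  (\prod_i u i ^+ al i) * (\prod_j v j ^+ be j).

Inductive box_span (R : nat) : E -> Prop :=
| box_span0 : box_span R 0
| box_spanM (al : 'I_N -> nat) (be : 'I_M -> nat) (c : K) (y : E) :
    (forall i, (al i <= R)%N) -> (forall j, (be j < e)%N) -> box_span R y ->
    box_span R (kappa c * monomial al be + y).

Lemma box_spanD R a b : box_span R a -> box_span R b -> box_span R (a + b).
Proof.
elim=> [|al be c y Ha Hb _ IH] Hb'; first by rewrite add0r.
by rewrite -addrA; apply: box_spanM => //; apply: IH.
Qed.

Lemma box_spanZ R c a : box_span R a -> box_span R (kappa c * a).
Proof.
elim=> [|al be c' y Ha Hb _ IH]; first by rewrite mulr0; exact: box_span0.
by rewrite mulrDr mulrA -rmorphM; apply: box_spanM.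
Qed.

Lemma box_span_le R R' a : (R <= R')%N -> box_span R a -> box_span R' a.
Proof.
move=> HR; elim=> [|al be c y Ha Hb _ IH]; first exact: box_span0.
by apply: box_spanM => // i; apply: leq_trans (Ha i) HR.
Qed.

Lemma box_span_monomial R al be : (forall i, (al i <= R)%N) -> (forall j, (be j < e)%N) ->
  box_span R (monomial al be).
Proof.
move=> Ha Hb; rewrite -[monomial _ _]addr0 -[monomial _ _]mul1r -(rmorph1 kappa).
by apply: box_spanM => //; exact: box_span0.
Qed.

Lemma box_span1 : (0 < e)%N -> box_span 0 1.
Proof.
move=> He; have -> : (1 : E) = monomial (fun _ => 0%N) (fun _ => 0%N).
  by rewrite /monomial !big1 ?mulr1.
exact: box_span_monomial.
Qed.

Lemma box_span_sum R (I : Type) (r : seq I) (F : I -> E) :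
  (forall i, box_span R (F i)) -> box_span R (\sum_(i <- r) F i).
Proof. by move=> HF; apply: big_ind => //; [exact: box_span0|exact: box_spanD]. Qed.

Lemma box_span_mul_u R i y : box_span R y -> box_span R.+1 (u i * y).
Proof.
elim=> [|al be c y' Ha Hb _ IH]; first by rewrite mulr0; exact: box_span0.
rewrite mulrDr mulrCA.
have -> : u i * monomial al be = monomial (fun i' => al i' + (i' == i))%N be.
  by rewrite /monomial prod_expD prod_exp_delta; ring.
by apply: box_spanM => // i'; rewrite -addn1 leq_add // leq_b1.
Qed.

Lemma deg_span_mul_monomial R q al be : deg_span kappa u Delta q ->
  (forall i, (al i <= R)%N) -> (forall j, (be j < e)%N) ->
  box_span (R + Delta) (q * monomial al be).
Proof.
move=> Hq Ha Hb; elim: Hq => [|ga c y Hg _ IH]; first by rewrite mul0r; exact: box_span0.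
rewrite mulrDl -mulrA.
have -> : (\prod_i u i ^+ ga i) * monomial al be = monomial (fun i => al i + ga i)%N be.
  by rewrite /monomial prod_expD mulrA [X in X * _]mulrC.
by apply: box_spanM => // i; exact: leq_add.
Qed.

(* [v] is integral over [K[u]], with relations of [u]-degree at most [Delta]. *)
Hypothesis v_integral : forall j, exists l (q : 'I_l -> E) (t : 'I_l -> nat),
  [/\ forall k, deg_span kappa u Delta (q k), forall k, (t k < e)%N &
      v j ^+ e = \sum_k q k * v j ^+ t k].

Lemma box_span_mul_v_monomial R j al be : (forall i, (al i <= R)%N) -> (forall j, (be j < e)%N) ->
  box_span (R + Delta) (v j * monomial al be).
Proof.
move=> Ha Hb; case: (ltnP (be j).+1 e) => Hj.
  have -> : v j * monomial al be = monomial al (fun j' => be j' + (j' == j))%N.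
    by rewrite /monomial prod_expD prod_exp_delta; ring.
  apply: box_span_monomial => [i|j']; first by apply: leq_trans (Ha i) (leq_addr _ _).
  by case: eqP => [->|_]; rewrite ?addn1 ?addn0.
have He : (0 < e)%N by apply: leq_ltn_trans (Hb j).
have Hbe : (be j).+1 = e by apply/eqP; rewrite eqn_leq Hj (Hb j).
have [l [q [t [Hq Ht Hv]]]] := v_integral j.
(* the top power of [v j] is reduced by its integral relation *)
have -> : v j * monomial al be =
    \sum_k q k * monomial al (fun j' => if j' == j then t k else be j').
  have Htop : v j * \prod_j' v j' ^+ be j' = v j ^+ e * \prod_(j' | j' != j) v j' ^+ be j'.
    by rewrite (bigD1 j) //= mulrA -exprS Hbe.
  rewrite /monomial mulrCA Htop Hv big_distrl big_distrr /=.
  by apply: eq_bigr => k _; rewrite prod_exp_set; ring.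
apply: box_span_sum => k; apply: deg_span_mul_monomial => // j'.
by case: eqP.
Qed.

Lemma box_span_mul_v R j y : box_span R y -> box_span (R + Delta) (v j * y).
Proof.
elim=> [|al be c y' Ha Hb _ IH]; first by rewrite mulr0; exact: box_span0.
by rewrite mulrDr mulrCA; apply: box_spanD => //; apply: box_spanZ; exact: box_span_mul_v_monomial.
Qed.

Definition box_mul c0 x := forall R y, box_span R y -> box_span (R + c0) (x * y).

Lemma box_mul_le c0 c1 x : (c0 <= c1)%N -> box_mul c0 x -> box_mul c1 x.
Proof. by move=> H G R y Hy; apply: box_span_le (G R y Hy); rewrite leq_add2l. Qed.

Lemma box_mulD c0 c1 a b : box_mul c0 a -> box_mul c1 b -> box_mul (maxn c0 c1) (a + b).
Proof.
move=> Ga Gb R y Hy; rewrite mulrDl; apply: box_spanD.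
  by apply: box_span_le (Ga R y Hy); rewrite leq_add2l leq_maxl.
by apply: box_span_le (Gb R y Hy); rewrite leq_add2l leq_maxr.
Qed.

Lemma box_mulM c0 c1 a b : box_mul c0 a -> box_mul c1 b -> box_mul (c0 + c1) (a * b).
Proof. by move=> Ga Gb R y Hy; rewrite -mulrA (addnC c0) addnA; apply: Ga; exact: Gb. Qed.

Lemma box_mulX c0 x t : box_mul c0 x -> box_mul (t * c0) (x ^+ t).
Proof.
move=> G; elim: t => [|t IH]; first by move=> R y Hy; rewrite expr0 mul1r addn0.
by rewrite exprS mulSn; apply: box_mulM.
Qed.

Lemma in_alg_box_mul x : in_alg kappa (sum_case split u v) x -> exists c0, box_mul c0 x.
Proof.
case=> f ->; apply: (meval_ind (P := fun x => exists c0, box_mul c0 x)).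
- by move=> c; exists 0%N => R y Hy; rewrite addn0; apply: box_spanZ.
- by move=> a b [c0 Ha] [c1 Hb]; exists (maxn c0 c1); apply: box_mulD.
- by move=> a b [c0 Ha] [c1 Hb]; exists (c0 + c1)%N; apply: box_mulM.
move=> i; rewrite /sum_case; case: (split i) => j.
  by exists 1%N => R y Hy; rewrite addn1; apply: box_span_mul_u.
by exists Delta => R y Hy; apply: box_span_mul_v.
Qed.

End BoxSpan.

Section Dependence.
Variables (K E : fieldType) (kappa : {rmorphism K -> E}).

Lemma exists_kernel_vector (I J : finType) (A : I -> J -> K) : (#|J| < #|I|)%N ->
  exists c : I -> K, (exists i, c i != 0) /\ forall j, \sum_i c i * A i j = 0.
Proof.
move=> HIJ; pose Mat : 'M[K]_(#|I|, #|J|) := \matrix_(a, b) A (enum_val a) (enum_val b).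
have : kermx Mat != 0.
  rewrite -mxrank_eq0 mxrank_ker subn_eq0 -ltnNge.
  exact: leq_ltn_trans (rank_leq_col Mat) HIJ.
case/rowV0Pn => x /sub_kermxP Hxm Hx0; exists (fun i => x 0 (enum_rank i)); split.
  case: (pickP (fun a => x 0 a != 0)) => [a Ha|Hall].
    by exists (enum_val a); rewrite enum_valK.
  by case/eqP: Hx0; apply/rowP => a; rewrite mxE; apply/eqP; move/negbFE: (Hall a).
move=> j; have := congr1 (fun X : 'M_(1, #|J|) => X 0 (enum_rank j)) Hxm.
rewrite !mxE => Hj; rewrite -[RHS]Hj (big_enum_val (A := I)); apply: eq_bigr => a _.
by rewrite mxE enum_valK enum_rankK.
Qed.

Lemma lin_dep (I J : finType) (T : I -> E) (S : J -> E) (A : I -> J -> K) :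
  (forall i, T i = \sum_j kappa (A i j) * S j) -> (#|J| < #|I|)%N ->
  exists c : I -> K, (exists i, c i != 0) /\ \sum_i kappa (c i) * T i = 0.
Proof.
move=> HT HIJ; have [c [Hc0 Hc]] := @exists_kernel_vector I J A HIJ; exists c; split=> //.
under eq_bigr do rewrite HT big_distrr /=.
rewrite exchange_big /= big1 // => j _.
under eq_bigr do rewrite mulrA -rmorphM.
by rewrite -big_distrl /= -rmorph_sum Hc rmorph0 mul0r.
Qed.

End Dependence.

Section Box.
Variables (K E : fieldType) (kappa : {rmorphism K -> E}).
Variables (N M : nat) (u : 'I_N -> E) (v : 'I_M -> E) (e : nat).

Definition box R : finType := ({ffun 'I_N -> 'I_R.+1} * {ffun 'I_M -> 'I_e})%type.

Definition box_monomial R (p : box R) : E :=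
  monomial u v (fun i => p.1 i : nat) (fun j => p.2 j : nat).

Lemma card_box R : #|box R| = (R.+1 ^ N * e ^ M)%N.
Proof. by rewrite card_prod !card_ffun !card_ord. Qed.

Lemma box_span_coords R y : box_span kappa u v e R y ->
  exists c : box R -> K, y = \sum_p kappa (c p) * box_monomial p.
Proof.
elim=> [|al be c0 y' Ha Hb _ [c ->]].
  by exists (fun _ => 0); rewrite big1 // => p _; rewrite rmorph0 mul0r.
have Ha' i : (al i < R.+1)%N by rewrite ltnS.
pose p0 : box R := ([ffun i => Ordinal (Ha' i)], [ffun j => Ordinal (Hb j)]).
have Hp0 : box_monomial p0 = monomial u v al be.
  by rewrite /box_monomial /monomial; congr (_ * _); apply: eq_bigr => i _; rewrite ffunE.
exists (fun p => c p + (if p == p0 then c0 else 0)).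
symmetry; under eq_bigr do rewrite rmorphD mulrDl.
rewrite big_split /= addrC (bigD1 p0) //= eqxx big1 ?addr0 ?Hp0 // => p /negbTE ->.
by rewrite rmorph0 mul0r.
Qed.

End Box.

(* Exponent vectors in ['I_D ^ k], as nested pairs to recurse on [k]. *)
Fixpoint exps (D k : nat) : finType :=
  match k with 0 => unit | k'.+1 => (exps D k' * 'I_D)%type end.

Lemma card_exps D k : #|exps D k| = (D ^ k)%N.
Proof. by elim: k => [|k IH] /=; rewrite ?card_unit // card_prod IH card_ord expnSr. Qed.

Section ExpsMonomials.
Variables (K E : fieldType) (kappa : {rmorphism K -> E}) (D : nat).

Fixpoint exps_monomial (k : nat) : ('I_k -> E) -> exps D k -> E :=
  match k return ('I_k -> E) -> exps D k -> E with
  | 0 => fun _ _ => 1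
  | k'.+1 => fun x al =>
      exps_monomial (fun i => x (widen_ord (leqnSn k') i)) al.1 * x ord_max ^+ al.2
  end.

Fixpoint exps_mpoly (k : nat) : exps D k -> mpoly K k :=
  match k return exps D k -> mpoly K k with
  | 0 => fun _ => 1
  | k'.+1 => fun al => ((exps_mpoly al.1)%:P * 'X^(al.2) : {poly mpoly K k'})
  end.

Lemma meval_exps_mpoly k (x : 'I_k -> E) al : meval kappa x (exps_mpoly al) = exps_monomial x al.
Proof.
elim: k x al => [|k IH] x al /=; first exact: rmorph1.
rewrite map_poly_meval rmorphM /= map_polyC map_polyXn hornerM hornerC hornerXn.
by rewrite /= meval_rmorphE IH.
Qed.

Lemma exps_mpoly_free k (c : exps D k -> K) :
  \sum_al mconst k (c al) * exps_mpoly al = 0 -> forall al, c al = 0.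
Proof.
elim: k c => [|k IH] c /=.
  by rewrite (bigD1 tt) //= big1 ?addr0 ?mulr1 => [H [] //|[] //].
move=> H0 [al t0]; apply: (IH (fun al => c (al, t0))).
have := congr1 (fun p : {poly mpoly K k} => p`_t0) H0.
rewrite coef0 coef_sum => Hs; rewrite -[RHS]Hs.
transitivity (\sum_al \sum_t ((mconst k (c (al, t)))%:P * ((exps_mpoly al)%:P * 'X^t))`_t0);
  last by rewrite pair_big; apply: eq_bigr => -[al' t] _.
apply: eq_bigr => al' _.
rewrite (bigD1 t0) //= big1 ?addr0 => [|t /negbTE Ht]; rewrite mulrA -polyCM coefCM coefXn.
  by rewrite eqxx mulr1.
suff -> : (nat_of_ord t0 == t) = false by rewrite mulr0.
by apply/negbTE; apply: contraFN Ht => /eqP /val_inj ->.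
Qed.

End ExpsMonomials.

Lemma box_count_lt (N M e k c0 X : nat) : (N < k)%N -> X = ((k * c0).+1 ^ N * e ^ M)%N ->
  ((k * (X * c0)).+1 ^ N * e ^ M < X.+1 ^ k)%N.
Proof.
move=> HNk HX.
have H1 : ((k * (X * c0)).+1 ^ N <= (k * c0).+1 ^ N * X.+1 ^ N)%N.
  by rewrite -expnMn; case: N {HNk HX} => // N; rewrite leq_exp2r //; nia.
apply: (@leq_ltn_trans ((k * c0).+1 ^ N * X.+1 ^ N * e ^ M)); first by rewrite leq_mul2r H1 orbT.
apply: (@leq_trans (X.+1 ^ N.+1)); last by rewrite leq_pexp2l.
by rewrite mulnAC -HX expnS ltn_mul2r ltnSn expn_gt0.
Qed.

Section FracCount.
Variables (K E : fieldType) (kappa : {rmorphism K -> E}).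
Variables (N M : nat) (u : 'I_N -> E) (v : 'I_M -> E) (e : nat).
Hypothesis e_gt0 : (0 < e)%N.
Variable D : nat.

(* [\prod_i a_i ^ al_i * b_i ^ (D - 1 - al_i)]: the monomial [(a/b)^al] with
   the denominators cleared uniformly. *)
Fixpoint hom_monomial (k : nat) : ('I_k -> E) -> ('I_k -> E) -> exps D k -> E :=
  match k return ('I_k -> E) -> ('I_k -> E) -> exps D k -> E with
  | 0 => fun _ _ _ => 1
  | k'.+1 => fun a b al =>
      hom_monomial (fun i => a (widen_ord (leqnSn k') i))
        (fun i => b (widen_ord (leqnSn k') i)) al.1 *
      (a ord_max ^+ al.2 * b ord_max ^+ (D.-1 - al.2))
  end.

Fixpoint den_power (k : nat) : ('I_k -> E) -> E :=
  match k return ('I_k -> E) -> E with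
  | 0 => fun _ => 1
  | k'.+1 => fun b => den_power (fun i => b (widen_ord (leqnSn k') i)) * b ord_max ^+ D.-1
  end.

Lemma den_power_neq0 k (b : 'I_k -> E) : (forall i, b i != 0) -> den_power b != 0.
Proof.
elim: k b => [|k IH] b Hb /=; first exact: oner_neq0.
by rewrite mulf_neq0 ?expf_neq0 // IH.
Qed.

Lemma exps_lt (k : nat) (al : exps D k.+1) : (al.2 <= D.-1)%N.
Proof. by rewrite -ltnS (leq_trans (ltn_ord _)) // leqSpred. Qed.

Lemma hom_monomialE k (a b : 'I_k -> E) al : (forall i, b i != 0) ->
  hom_monomial a b al = exps_monomial (fun i => a i / b i) al * den_power b.
Proof.
elim: k a b al => [|k IH] a b al Hb /=; first by rewrite mulr1.
rewrite IH // -[in RHS](subnKC (exps_lt al)) exprD expr_div_n.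
have : b ord_max ^+ al.2 != 0 by rewrite expf_neq0.
by move=> Hbt; field.
Qed.

Lemma hom_monomial_box_span c0 k (a b : 'I_k -> E) al :
  (forall i, box_mul kappa u v e c0 (a i)) -> (forall i, box_mul kappa u v e c0 (b i)) ->
  box_span kappa u v e (k * (D.-1 * c0)) (hom_monomial a b al).
Proof.
elim: k a b al => [|k IH] a b al Ha Hb /=; first exact: box_span1.
have G : box_mul kappa u v e (D.-1 * c0) (a ord_max ^+ al.2 * b ord_max ^+ (D.-1 - al.2)).
  by rewrite -{1}(subnKC (exps_lt al)) mulnDl; apply: box_mulM; exact: box_mulX.
by rewrite mulrC mulSnr; apply: G; apply: IH => i; [exact: Ha|exact: Hb].
Qed.

End FracCount.

(* For [k > N] and large [D] there are more products [(a/b)^al] with [al < D]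
   than monomials spanning their cleared numerators, hence a [K]-relation. *)
Lemma alg_free_frac_card_le (K E : fieldType) (kappa : {rmorphism K -> E}) N M
    (u : 'I_N -> E) (v : 'I_M -> E) e k (a b : 'I_k -> E) c0 :
  (0 < e)%N -> (forall i, b i != 0) ->
  (forall i, box_mul kappa u v e c0 (a i)) -> (forall i, box_mul kappa u v e c0 (b i)) ->
  alg_free kappa (fun i => a i / b i) -> (k <= N)%N.
Proof.
move=> He Hb Ga Gb Hfree; rewrite leqNgt; apply/negP => HNk.
pose X := ((k * c0).+1 ^ N * e ^ M)%N; pose D := X.+1.
have HT (al : exps D k) : exists c : box N M e (k * (D.-1 * c0)) -> K,
    hom_monomial a b al = \sum_p kappa (c p) * box_monomial u v p.
  exact/box_span_coords/hom_monomial_box_span.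
have [A HA] := fin_all_exists HT.
have [|c [[al0 Hal0] Hc]] := lin_dep HA.
  by rewrite card_box card_exps (box_count_lt HNk (erefl X)).
have Hz : \sum_al kappa (c al) * exps_monomial (fun i => a i / b i) al = 0.
  move: Hc; under eq_bigr do rewrite hom_monomialE // mulrA.
  by rewrite -big_distrl /= => /eqP; rewrite mulf_eq0 (negbTE (den_power_neq0 D Hb)) orbF => /eqP.
have HP : meval kappa (fun i => a i / b i) (\sum_al mconst k (c al) * @exps_mpoly K D k al) = 0.
  rewrite meval_sum -[RHS]Hz; apply: eq_bigr => al _.
  by rewrite mevalM meval_mconst meval_exps_mpoly.
by move/eqP: Hal0; apply; apply: exps_mpoly_free (Hfree _ HP) al0.
Qed.

(* Multiplying [P y = 0] by [c ^ (d - 1)] shows that [c y] is integral. *)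
Lemma lead_coef_root_expn (R : comNzRingType) (P : {poly R}) y d e :
  P.[y] = 0 -> size P = d.+1 -> (0 < d <= e)%N ->
  (lead_coef P * y) ^+ e = \sum_(l < d)
    - (P`_l * lead_coef P ^+ (d.-1 - l)) * (lead_coef P * y) ^+ (l + (e - d)).
Proof.
move=> Hy Hs /andP[Hd He]; set c := lead_coef P.
have Hrel : c * y ^+ d = - \sum_(l < d) P`_l * y ^+ l.
  move: Hy; rewrite horner_coef Hs big_ord_recr /= -/(lead_coef P).
  by rewrite /c lead_coefE Hs => /eqP; rewrite addrC addr_eq0 => /eqP.
have -> : (c * y) ^+ e = (c * y) ^+ (e - d) * (c ^+ d.-1 * (c * y ^+ d)).
  by rewrite [c ^+ d.-1 * _]mulrA -exprSr prednK // -exprMn -exprD subnK.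
rewrite Hrel -sumrN !big_distrr /=; apply: eq_bigr => l _.
have Hle : (l <= d.-1)%N by rewrite -ltnS prednK.
rewrite -(subnK Hle) exprD exprD !exprMn subnK //.
move: (c ^+ (d.-1 - l)) (c ^+ l) (y ^+ l) (c ^+ (e - d)) (y ^+ (e - d)) (P`_l) => A B C D F G.
by ring.
Qed.

Section IntegralScaling.
Variables (K E : fieldType) (kappa : {rmorphism K -> E}) (N : nat) (u : 'I_N -> E).

Lemma algebraic_over_scaled_integral y : algebraic_over kappa u y -> exists c e0,
  [/\ c != 0, in_alg kappa u c, (0 < e0)%N &
  forall e, (e0 <= e)%N -> exists l (q : 'I_l -> E) (t : 'I_l -> nat),
    [/\ forall k, in_alg kappa u (q k), forall k, (t k < e)%N &
        (c * y) ^+ e = \sum_k q k * (c * y) ^+ t k]].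
Proof.
case=> P [Hl Hr].
pose Pm := map_poly (meval_rmorph kappa u) P.
have Hlc : lead_coef Pm = meval kappa u (lead_coef P).
  by rewrite lead_coef_map_id0 ?rmorph0 ?meval_rmorphE.
have Hy : Pm.[y] = 0 by rewrite /Pm -map_poly_meval.
have HPm0 : Pm != 0 by rewrite -lead_coef_eq0 Hlc.
pose d := (size Pm).-1.
have Hs : size Pm = d.+1 by rewrite prednK // size_poly_gt0.
have Hd : (0 < d)%N.
  rewrite lt0n; apply: contraNneq Hl => Hd0; move: Hy.
  by rewrite horner_coef Hs Hd0 big_ord1 expr0 mulr1 -Hlc lead_coefE Hs Hd0 => /eqP.
have HPl l : in_alg kappa u (Pm`_l).
  by rewrite coef_map_id0 ?rmorph0 //; exists (P`_l); rewrite meval_rmorphE.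
have Hc : in_alg kappa u (lead_coef Pm) by rewrite Hlc; exists (lead_coef P).
exists (lead_coef Pm), d; rewrite Hlc in Hc *; split=> // e He.
exists d, (fun l : 'I_d => - (Pm`_l * lead_coef Pm ^+ (d.-1 - l))), (fun l => l + (e - d))%N.
split=> [l|l|]; last by rewrite -Hlc; apply: lead_coef_root_expn; rewrite ?Hd.
- by apply/in_algN/in_algM; rewrite ?Hlc; [|apply: in_algX].
- by have := ltn_ord l; lia.
Qed.

Lemma integral_scaling M (v : 'I_M -> E) : (forall j, algebraic_over kappa u (v j)) ->
  exists (c : 'I_M -> E) e Delta, [/\ (0 < e)%N,
    forall j, c j != 0 /\ in_alg kappa u (c j) &
    forall j, exists l (q : 'I_l -> E) (t : 'I_l -> nat),
      [/\ forall k, deg_span kappa u Delta (q k), forall k, (t k < e)%N &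
          (c j * v j) ^+ e = \sum_k q k * (c j * v j) ^+ t k]].
Proof.
move=> Halg.
have [c Hc] := fin_all_exists (fun j => algebraic_over_scaled_integral (Halg j)).
have [e0 He0] := fin_all_exists Hc.
pose e := (\max_j e0 j).+1.
have Hrel j : exists Dj l (q : 'I_l -> E) (t : 'I_l -> nat),
    [/\ forall k, deg_span kappa u Dj (q k), forall k, (t k < e)%N &
        (c j * v j) ^+ e = \sum_k q k * (c j * v j) ^+ t k].
  have [_ _ _ /(_ e (leq_trans (leq_bigmax j) (leqnSn _)))[l [q [t [Hq Ht Hr]]]]] := He0 j.
  have [D HD] := fin_all_exists (fun k => in_alg_deg_span (Hq k)).
  exists (\max_k D k), l, q, t; split=> // k.
  by apply: deg_span_le (HD k); apply: leq_bigmax.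
have [D HD] := fin_all_exists Hrel.
exists c, e, (\max_j D j); split=> // [j|j]; first by have [] := He0 j.
have [l [q [t [Hq Ht Hr]]]] := HD j; exists l, q, t; split=> // k.
by apply: deg_span_le (Hq k); apply: leq_bigmax.
Qed.

End IntegralScaling.

Lemma sum_case_lshift (T : Type) a b (u : 'I_a -> T) (v : 'I_b -> T) j :
  sum_case split u v (lshift b j) = u j.
Proof. by rewrite /sum_case split_lshift. Qed.

Lemma sum_case_rshift (T : Type) a b (u : 'I_a -> T) (v : 'I_b -> T) j :
  sum_case split u v (rshift a j) = v j.
Proof. by rewrite /sum_case split_rshift. Qed.

Section TrdegBound.
Variables (K E : fieldType) (kappa : {rmorphism K -> E}).
Variables (N M : nat) (u : 'I_N -> E).

Lemma in_field_scaled (v c : 'I_M -> E) z :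
  (forall j, c j != 0 /\ in_alg kappa u (c j)) ->
  in_field kappa (sum_case split u v) z ->
  exists ab : E * E, let w := sum_case split u (fun j => c j * v j) in
    [/\ in_alg kappa w ab.1, in_alg kappa w ab.2, ab.2 != 0 & z = ab.1 / ab.2].
Proof.
move=> Hc Hz; set w := sum_case split u (fun j => c j * v j).
have Hu i : in_alg kappa w (u i).
  by rewrite -(sum_case_lshift u (fun j => c j * v j) i); exact: in_alg_var.
have Hcoord i : in_field kappa w (sum_case split u v i).
  rewrite /sum_case; case: (split i) => j; first exact/in_alg_field.
  have [Hc0 [f Hf]] := Hc j.
  have -> : v j = (c j * v j) / c j by rewrite [c j * _]mulrC mulfK.
  apply: in_field_div => //; last by apply/in_alg_field; rewrite Hf; exact: in_alg_meval.
  by apply/in_alg_field; rewrite -(sum_case_rshift u (fun j => c j * v j) j); exact: in_alg_var.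
have [f [g [Hg ->]]] := in_field_trans Hcoord Hz.
by exists (meval kappa w f, meval kappa w g); split=> //; eexists.
Qed.

Lemma alg_free_card_le (v : 'I_M -> E) : (forall j, algebraic_over kappa u (v j)) ->
  forall k (z : 'I_k -> E), (forall i, in_field kappa (sum_case split u v) (z i)) ->
  alg_free kappa z -> (k <= N)%N.
Proof.
move=> Halg k z Hz Hfree.
have [c [e [Delta [He Hc Hint]]]] := integral_scaling Halg.
have [ab Hab] := fin_all_exists (fun i => in_field_scaled Hc (Hz i)).
have Hmul i : exists c0, box_mul kappa u (fun j => c j * v j) e c0 (ab i).1 /\
                         box_mul kappa u (fun j => c j * v j) e c0 (ab i).2.
  have [Ha Hb _ _] := Hab i.
  have [c1 G1] := in_alg_box_mul Hint Ha; have [c2 G2] := in_alg_box_mul Hint Hb.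
  by exists (maxn c1 c2); split; [apply: box_mul_le G1|apply: box_mul_le G2];
    rewrite ?leq_maxl ?leq_maxr.
have [cm Hcm] := fin_all_exists Hmul.
apply: (alg_free_frac_card_le (c0 := \max_i cm i) He (a := fun i => (ab i).1)
  (b := fun i => (ab i).2)) => [i|i|i|]; first by have [] := Hab i.
- by apply: box_mul_le (proj1 (Hcm i)); apply: leq_bigmax.
- by apply: box_mul_le (proj2 (Hcm i)); apply: leq_bigmax.
- by apply: eq_alg_free Hfree => i; have [] := Hab i.
Qed.

End TrdegBound.

Section Trdeg.
Variables (K L : fieldType) (iota : {rmorphism K -> L}) (n : nat).

Definition coefF_rmorph : {rmorphism K -> FLx L n} := (@tofrac (mpoly L n) \o coefL iota n)%FUN.

Lemma meval_coefFE m (z : 'I_m -> FLx L n) f :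
  meval (coefF iota n) z f = meval coefF_rmorph z f.
Proof. by apply: eq_meval => // c; rewrite /coefF /toF /= coefLxE. Qed.

Lemma in_KG_field m (G : 'I_m -> mpoly L n) z :
  in_KG iota G z <-> in_field coefF_rmorph (fun i => toF (G i)) z.
Proof. by split=> -[f [g Hfg]]; exists f, g; move: Hfg; rewrite !meval_coefFE. Qed.

Lemma alg_indep_free k (z : 'I_k -> FLx L n) : alg_indep iota z <-> alg_free coefF_rmorph z.
Proof. by split=> Hz f Hf; apply: Hz; move: Hf; rewrite meval_coefFE. Qed.

Lemma meval_toF m (G : 'I_m -> mpoly L n) f :
  meval coefF_rmorph (fun i => toF (G i)) f = toF (meval (coefL iota n) G f).
Proof. by rewrite /toF rmorph_meval. Qed.

Lemma trdeg_is_basis m (G : 'I_m -> mpoly L n) d (y : 'I_d -> FLx L n) M (w : 'I_M -> FLx L n) :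
  (forall i, in_KG iota G (y i)) -> alg_free coefF_rmorph y ->
  (forall j, algebraic_over coefF_rmorph y (w j)) ->
  (forall j, in_field coefF_rmorph (sum_case split y w) (toF (G j))) ->
  trdeg_is iota G d.
Proof.
move=> Hy Hfree Halg HG; split; first by exists y; split=> //; apply/alg_indep_free.
move=> k z Hz /alg_indep_free Hzfree; apply: (alg_free_card_le Halg _ Hzfree) => i.
by apply: in_field_trans HG _; apply/in_KG_field.
Qed.

End Trdeg.

Lemma trdeg_tail_head (K L : fieldType) (iota : {rmorphism K -> L}) (n s r : nat)
    (H : 'I_(s + r) -> mpoly L n) :
  (forall j : 'I_s, proj_image_apex iota H (@std_basis L s r j)) ->
  exists d, trdeg_is iota (fun i : 'I_r => H (rshift s i)) d /\ trdeg_is iota H (d + s)%N.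
Proof.
move=> hH; pose xF i := toF (H i); pose xF' i := xF (rshift s i).
have [d [sg [Hfree Halg]]] := exists_transcendence_basis (coefF_rmorph iota n) xF'.
pose y := sum_case split (fun j => xF' (sg j)) (fun j => xF (lshift r j)).
exists d; split.
  apply: (trdeg_is_basis (w := xF')) Hfree Halg _ => [i|j]; first exact/in_KG_field/in_field_var.
  by rewrite -[toF _](sum_case_rshift (fun j => xF' (sg j)) xF' j); exact: in_field_var.
apply: (trdeg_is_basis (y := y) (w := xF')) => [i|Phi HPhi|j|j].
- by apply/in_KG_field; rewrite /y /sum_case; case: split => j; exact: in_field_var.
- apply: (indep_tail_head (fun j => std_basis_coord_apex (hH j))) => [g Hg|].
    by apply: Hfree; rewrite meval_toF Hg /toF tofrac0.
  apply/eqP; rewrite -(@tofrac_eq0 (mpoly L n)) -/(toF _) -meval_toF -HPhi.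
  by apply/eqP/eq_meval => // i; rewrite /y /sum_case; case: split.
- apply: (algebraic_over_relabel (tau := lshift s)); apply: eq_algebraic_over (Halg j) => i.
  by rewrite /y sum_case_lshift.
- rewrite -(splitK j); case: (split j) => j0 /=.
    have -> : toF (H (lshift r j0)) = sum_case split y xF' (lshift _ (rshift d j0)).
      by rewrite sum_case_lshift /y sum_case_rshift.
    exact: in_field_var.
  by rewrite -[toF _](sum_case_rshift y xF' j0); exact: in_field_var.
Qed.

Unset Implicit Arguments.

Theorem proposition3p8 (K L : fieldType) (iota : {rmorphism K -> L})
  (n s r : nat) (H : 'I_(s + r) -> mpoly L n)
  (hH : forall j : 'I_s, proj_image_apex iota H (@std_basis L s r j)) :
  (forall a : 'I_(s + r) -> L,
     image_apex iota H a <->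
     image_apex iota (fun i : 'I_r => H (rshift s i)) (fun i => a (rshift s i)))
  /\
  (forall p : 'I_(s + r) -> L, (exists i : 'I_r, p (rshift s i) != 0) ->
     (proj_image_apex iota H p <->
      proj_image_apex iota (fun i : 'I_r => H (rshift s i)) (fun i => p (rshift s i))))
  /\
  (exists d : nat,
     trdeg_is iota (fun i : 'I_r => H (rshift s i)) d /\
     trdeg_is iota H (d + s)%N).
Proof.
split; first by move=> a; exact: image_apex_tail.
split; first by move=> p; exact: proj_image_apex_tail.
exact: trdeg_tail_head.
Qed.
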